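(* Let $X$ be a Minkowski plane and $\mathbf{a}_1,\mathbf{a}_2,\mathbf{a}_3\in X\setminus\{\mathbf{o}\}$. The configuration $\{\mathbf{o}\mathbf{a}_1,\mathbf{o}\mathbf{a}_2,\mathbf{o}\mathbf{a}_3\}$ is a floating FT configuration if and only if it is not pointed and all angles $\sphericalangle\mathbf{a}_i\mathbf{o}\mathbf{a}_j$ ($i\neq j$) are critical.
   Context: A Minkowski plane is a two-dimensional real normed space $(X,\|\cdot\|)$. A Fermat-Torricelli (FT) point of finitely many points $\mathbf{x}_1,\dots,\mathbf{x}_n$ is a minimizer of $\mathbf{x}\mapsto\sum_i\|\mathbf{x}-\mathbf{x}_i\|$. A configuration $\{\mathbf{x}_0\mathbf{x}_i: i=1,\dots,n\}$ (segments from $\mathbf{x}_0$ with $\mathbf{x}_i\neq\mathbf{x}_0$) is a floating FT configuration if $\mathbf{x}_0$ is an FT point of $\{\mathbf{x}_1,\dots,\mathbf{x}_n\}$. It is pointed if there is a line $H$ through $\mathbf{x}_0$ such that the relative interiors of all segments $\mathbf{x}_0\mathbf{x}_i$ lie in the same open half-plane bounded by $H$. The angle $\sphericalangle\mathbf{x}_1\mathbf{x}_0\mathbf{x}_2$ is the convex cone bounded by the rays from $\mathbf{x}_0$ through $\mathbf{x}_1$ and through $\mathbf{x}_2$; it is critical if there exists a point $\mathbf{x}_3\neq\mathbf{x}_0$ such that $\mathbf{x}_0$ is an FT point of $\{\mathbf{x}_1,\mathbf{x}_2,\mathbf{x}_3\}$. *)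

(* a Minkowski plane is modelled as R^2 = 'rV[R]_2 (R : realType)
   equipped with an arbitrary norm N.  Every 2-dimensional real normed space is
   linearly isometric to such a (R^2, N). *)
From mathcomp Require Import all_boot all_order all_algebra.
From mathcomp Require Import reals.
Set Implicit Arguments. Unset Strict Implicit. Unset Printing Implicit Defensive.
Import Order.TTheory GRing.Theory Num.Theory.
Local Open Scope ring_scope.

Section Defs.
Variable R : realType.
Notation V := 'rV[R]_2.

(* N is a norm on R^2 (nonnegativity follows from these axioms). *)
Definition is_norm (N : V -> R) : Prop :=
  [/\ (forall x, N x = 0 -> x = 0),
      (forall (a : R) (x : V), N (a *: x) = `|a| * N x) &
      (forall x y, N (x + y) <= N x + N y)].

Definition FT_point (N : V -> R) (x0 : V) (s : seq V) : Prop :=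
  forall x : V, \sum_(y <- s) N (x0 - y) <= \sum_(y <- s) N (x - y).

Definition floating_FT_config (N : V -> R) (x0 : V) (s : seq V) : Prop :=
  (forall y, y \in s -> y != x0) /\ FT_point N x0 s.

Definition dotp (c x : V) : R := c 0 0 * x 0 0 + c 0 1 * x 0 1.

(* pointed: some line H = {x | c.(x - x0) = 0} through x0 (c <> 0) such that the
   relative interiors {x0 + t (xi - x0) : 0 < t < 1} of all segments lie in the
   same open half-plane bounded by H (w.l.o.g. {x | c.(x - x0) > 0}, replacing
   c by -c). *)
Definition pointed (x0 : V) (s : seq V) : Prop :=
  exists c : V, c != 0 /\
    forall y, y \in s -> forall t : R, 0 < t < 1 ->
      0 < dotp c ((x0 + t *: (y - x0)) - x0).

Definition critical (N : V -> R) (x1 x0 x2 : V) : Prop :=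
  exists x3 : V, x3 != x0 /\ FT_point N x0 [:: x1; x2; x3].

End Defs.

From mathcomp Require Import all_boot all_order all_algebra.
From mathcomp Require Import reals classical_sets.
From mathcomp Require Import ring lra.

(* By convexity, [0] is an FT point of [a1, a2, a3] iff the sum of the one-sided
   directional derivatives of [N] at the [a_i] is nonnegative in every direction.
   If the configuration is pointed, some [a_k] lies in the cone of the other two,
   and moving [0] slightly towards [a_k] decreases the total distance; each
   angle is critical, the third point being the witness.  Conversely, a critical
   angle [a_i o a_j] yields two inequalities between the derivatives at [a_i],
   [a_j] and [N].  If two of the [a_i] are collinear they point in opposite
   directions and the derivative sum is controlled on that line.  Otherwise
   non-pointedness gives a relation [l1 a1 + l2 a2 + l3 a3 = 0] with [l_i > 0];
   the six rays [+- a_i] cut the plane into cones on each of which the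
   derivative sum is linear, and it is nonnegative on every ray. *)

Set Implicit Arguments.
Unset Strict Implicit.
Unset Printing Implicit Defensive.

Import Order.TTheory GRing.Theory Num.Theory.
Local Open Scope ring_scope.
Local Open Scope classical_set_scope.

Section PlaneGeometry.
Variable R : realType.
Local Notation V := 'rV[R]_2.

Lemma row2P (u v : V) : u 0 0 = v 0 0 -> u 0 1 = v 0 1 -> u = v.
Proof.
move=> h0 h1; apply/rowP => -[[|[|//]] i2].
  by rewrite (_ : Ordinal i2 = 0) //; apply: val_inj.
by rewrite (_ : Ordinal i2 = 1) //; apply: val_inj.
Qed.

Lemma scaleNN (k : R) (x : V) : (- k) *: (- x) = k *: x.
Proof. by rewrite scaleNr scalerN opprK. Qed.

Definition det2 (u v : V) := u 0 0 * v 0 1 - u 0 1 * v 0 0.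

Lemma det2C u v : det2 u v = - det2 v u.
Proof. by rewrite /det2; ring. Qed.

Lemma det2_cramer a1 a2 a3 :
  det2 a2 a3 *: a1 + det2 a3 a1 *: a2 + det2 a1 a2 *: a3 = 0.
Proof. by apply: row2P; rewrite !mxE /det2; ring. Qed.

Lemma det2_span b1 b2 x : det2 b1 b2 != 0 ->
  exists s t, x = s *: b1 + t *: b2.
Proof.
rewrite /det2 => hd; exists (det2 x b2 / det2 b1 b2), (det2 b1 x / det2 b1 b2).
by apply: row2P; rewrite /det2 !mxE; field.
Qed.

Lemma det2_eq0_colinear u v : det2 u v = 0 -> u != 0 -> exists c, v = c *: u.
Proof.
rewrite /det2 => hd hu; have [u0|u0] := eqVneq (u 0 0) 0.
  have u1 : u 0 1 != 0.
    by apply: contra hu => /eqP u1; apply/eqP/row2P; rewrite !mxE.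
  exists (v 0 1 / u 0 1); apply: row2P; rewrite !mxE ?divfK //.
  by rewrite mulrAC -[v 0 0](mulfK u1); congr (_ / _); nra.
exists (v 0 0 / u 0 0); apply: row2P; rewrite !mxE ?divfK //.
by rewrite mulrAC -[v 0 1](mulfK u0); congr (_ / _); nra.
Qed.

Definition perp (u : V) : V := \row_(j < 2) (if j == 0 then - u 0 1 else u 0 0).

Lemma dotpZr c (k : R) x : dotp c (k *: x) = k * dotp c x.
Proof. by rewrite /dotp !mxE; ring. Qed.

Lemma dotpDr c x y : dotp c (x + y) = dotp c x + dotp c y :> R.
Proof. by rewrite /dotp !mxE; ring. Qed.

Lemma dotp0l x : dotp 0 x = 0 :> R.
Proof. by rewrite /dotp !mxE; ring. Qed.

Lemma dotp0r c : dotp c 0 = 0 :> R.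
Proof. by rewrite /dotp !mxE; ring. Qed.

Lemma pointed0P (y0 : V) s : pointed 0 (y0 :: s) <->
  exists c, forall y, y \in y0 :: s -> 0 < dotp c y.
Proof.
split=> [[c [_ hc]]|[c hc]].
  have half : 0 < (1 / 2 : R) < 1.
    by apply/andP; split; lra.
  exists c => y /hc /(_ (1 / 2) half); rewrite !subr0 add0r dotpZr.
  by rewrite pmulr_rgt0 //; case/andP: half.
exists c; split=> [|y /hc hy t /andP[t0 _]].
  by apply: contraTneq (hc y0 (mem_head _ _)) => ->; rewrite dotp0l ltxx.
by rewrite !subr0 add0r dotpZr mulr_gt0.
Qed.

Definition in_cone (b1 b2 b3 : V) :=
  exists al be : R, [/\ 0 <= al, 0 <= be & b3 = al *: b1 + be *: b2].

Lemma relation3_solve (b1 b2 b3 : V) (l1 l2 l3 : R) :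
  l1 *: b1 + l2 *: b2 + l3 *: b3 = 0 -> l3 != 0 ->
  b3 = (- (l1 / l3)) *: b1 + (- (l2 / l3)) *: b2.
Proof.
move=> /rowP G hl3.
have solve x1 x2 x3 : l1 * x1 + l2 * x2 + l3 * x3 = 0 ->
    x3 = - (l1 / l3) * x1 + - (l2 / l3) * x2.
  move=> e; rewrite -(mulKf hl3 x3) (_ : l3 * x3 = - (l1 * x1 + l2 * x2)).
    by field.
  by lra.
by apply: row2P; rewrite !mxE; apply: solve; have := G 0; have := G 1; rewrite !mxE.
Qed.

Lemma in_cone_of_relation b1 b2 b3 l1 l2 l3 :
  l1 *: b1 + l2 *: b2 + l3 *: b3 = 0 -> l3 != 0 ->
  l1 * l3 <= 0 -> l2 * l3 <= 0 -> in_cone b1 b2 b3.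
Proof.
move=> G hl3 h1 h2.
have coef l : l * l3 <= 0 -> 0 <= - (l / l3).
  move=> h; rewrite (_ : l / l3 = (l * l3) / (l3 ^+ 2)); last by field.
  by rewrite -mulNr divr_ge0 ?oppr_ge0 ?sqr_ge0.
by exists (- (l1 / l3)), (- (l2 / l3)); rewrite !coef // (relation3_solve G).
Qed.

Lemma pointed_of_in_cone b1 b2 b3 : det2 b1 b2 != 0 -> b3 != 0 ->
  in_cone b1 b2 b3 -> exists c, [/\ 0 < dotp c b1, 0 < dotp c b2 & 0 < dotp c b3].
Proof.
move=> hd hb3 [al [be [hal hbe eb3]]].
pose c := det2 b1 b2 *: (perp b1 - perp b2).
have cb1 : dotp c b1 = det2 b1 b2 ^+ 2 by rewrite /c /dotp /det2 !mxE /=; ring.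
have cb2 : dotp c b2 = det2 b1 b2 ^+ 2 by rewrite /c /dotp /det2 !mxE /=; ring.
have d2 : 0 < det2 b1 b2 ^+ 2 by rewrite exprn_even_gt0.
have ab : 0 < al + be.
  rewrite lt_neqAle addr_ge0 // andbT eq_sym; apply: contra hb3 => /eqP ab0.
  have [al0 be0] : al = 0 /\ be = 0 by split; lra.
  by rewrite eb3 al0 be0 !scale0r addr0.
have cb3 : dotp c b3 = al * dotp c b1 + be * dotp c b2.
  by rewrite eb3 /dotp !mxE; ring.
by exists c; rewrite cb3 cb1 cb2 -mulrDl; split => //; apply: mulr_gt0.
Qed.

Lemma in_cone_of_det2_eq0 b1 b2 b3 c : det2 b1 b2 = 0 -> b1 != 0 ->
  0 < dotp c b1 -> 0 < dotp c b2 -> in_cone b1 b3 b2.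
Proof.
move=> hd hb1 p1 p2; have [k eb2] := det2_eq0_colinear hd hb1.
have hk : 0 <= k by move: p2; rewrite eb2 dotpZr pmulr_lgt0 // => /ltW.
by exists k, 0; rewrite scale0r addr0.
Qed.

Lemma cone6_cover a1 a2 a3 (l1 l2 l3 : R) w : 0 < l1 -> 0 < l2 -> 0 < l3 ->
  l1 *: a1 + l2 *: a2 + l3 *: a3 = 0 -> det2 a1 a2 != 0 ->
  [\/ in_cone a1 (- a3) w \/ in_cone a2 (- a3) w,
      in_cone a1 (- a2) w \/ in_cone a3 (- a2) w |
      in_cone a2 (- a1) w \/ in_cone a3 (- a1) w].
Proof.
move=> hl1 hl2 hl3 G hd; have [s [t ->]] := det2_span w hd.
have e3 := relation3_solve G (lt0r_neq0 hl3).
wlog hst : a1 a2 l1 l2 s t hl1 hl2 G hd e3 / t * l1 <= s * l2.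
  move=> base; have [h|h] := leP (t * l1) (s * l2); first exact: (base a1 a2 l1 l2).
  rewrite addrC; case: (base a2 a1 l2 l1 t s) => //.
  - by rewrite [l2 *: a2 + _]addrC.
  - by rewrite det2C oppr_eq0.
  - by rewrite e3 addrC.
  - exact: ltW.
  - by case=> hc; constructor 1; [right | left].
  - by move=> hc; constructor 3.
  - by move=> hc; constructor 2.
have [hs|hs] := leP 0 s; have [ht|ht] := leP 0 t.
- constructor 1; left; exists ((s * l2 - t * l1) / l2), (t * l3 / l2); split.
  + by rewrite divr_ge0 ?subr_ge0 // ltW.
  + by rewrite divr_ge0 ?mulr_ge0 // ltW.
  by rewrite e3; apply: row2P; rewrite !mxE; field; rewrite !gt_eqF.
- by constructor 2; left; exists s, (- t); rewrite scaleNN oppr_ge0; split => //; apply: ltW.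
- by exfalso; nra.
constructor 2; right; exists (- (s * l3) / l1), ((s * l2 - t * l1) / l1); split.
- by apply: divr_ge0; nra.
- by rewrite divr_ge0 ?subr_ge0 // ltW.
by rewrite e3; apply: row2P; rewrite !mxE; field; rewrite !gt_eqF.
Qed.

Lemma sign_cases3 (d1 d2 d3 : R) : d1 != 0 -> d2 != 0 -> d3 != 0 ->
  [\/ 0 < d1 * d2 /\ 0 < d1 * d3, d2 * d1 < 0 /\ d3 * d1 < 0,
      d1 * d2 < 0 /\ d3 * d2 < 0 | d1 * d3 < 0 /\ d2 * d3 < 0].
Proof.
rewrite !neq_lt => /orP[]h1 /orP[]h2 /orP[]h3;
  first [ by constructor 1; split; nra | by constructor 2; split; nra
        | by constructor 3; split; nra | by constructor 4; split; nra ].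
Qed.

Lemma relation_or_in_cone a1 a2 a3 :
  det2 a2 a3 != 0 -> det2 a3 a1 != 0 -> det2 a1 a2 != 0 ->
  [\/ exists l1 l2 l3 : R,
        [/\ 0 < l1, 0 < l2, 0 < l3 & l1 *: a1 + l2 *: a2 + l3 *: a3 = 0],
      in_cone a2 a3 a1, in_cone a1 a3 a2 | in_cone a1 a2 a3].
Proof.
move=> d1 d2 d3; have rel := det2_cramer a1 a2 a3.
case: (sign_cases3 d1 d2 d3) => [[q2 q3]|[q2 q3]|[q1 q3]|[q1 q2]].
- constructor 1.
  exists (det2 a2 a3 * det2 a2 a3), (det2 a2 a3 * det2 a3 a1), (det2 a2 a3 * det2 a1 a2).
  split => //; first by rewrite -expr2 exprn_even_gt0.
  by rewrite -!scalerA -!scalerDr rel scaler0.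
- constructor 2.
  by apply: (in_cone_of_relation (det2_cramer a2 a3 a1)) => //; apply: ltW.
- constructor 3; have rel132 : det2 a2 a3 *: a1 + det2 a1 a2 *: a3 + det2 a3 a1 *: a2 = 0.
    by rewrite addrAC.
  by apply: (in_cone_of_relation rel132) => //; apply: ltW.
- by constructor 4; apply: (in_cone_of_relation rel) => //; apply: ltW.
Qed.

Lemma not_pointed_relation a1 a2 a3 : a1 != 0 -> a2 != 0 -> a3 != 0 ->
  det2 a2 a3 != 0 -> det2 a3 a1 != 0 -> det2 a1 a2 != 0 ->
  ~ pointed 0 [:: a1; a2; a3] ->
  exists l1 l2 l3 : R, [/\ 0 < l1, 0 < l2, 0 < l3 & l1 *: a1 + l2 *: a2 + l3 *: a3 = 0].
Proof.
move=> n1 n2 n3 d1 d2 d3 np.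
have no_cone b1 b2 b3 : det2 b1 b2 != 0 -> b3 != 0 -> in_cone b1 b2 b3 ->
    perm_eq [:: a1; a2; a3] [:: b1; b2; b3] -> False.
  move=> hd nb3 hc hp; apply: np; apply/pointed0P.
  have [c [p1 p2 p3]] := pointed_of_in_cone hd nb3 hc.
  by exists c => y; rewrite (perm_mem hp) !inE => /or3P[] /eqP ->.
case: (relation_or_in_cone d1 d2 d3) => // hc; exfalso.
- by apply: (no_cone _ _ _ d1 n1 hc); apply/permP => p /=; ring.
- apply: (no_cone _ _ _ _ n2 hc); last by apply/permP => p /=; ring.
  by rewrite det2C oppr_eq0.
exact: (no_cone _ _ _ d3 n3 hc).
Qed.

End PlaneGeometry.

Section MinkowskiPlane.
Variable R : realType.
Variable N : 'rV[R]_2 -> R.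
Hypothesis hN : is_norm N.
Local Notation V := 'rV[R]_2.

Lemma nrm_eq0 x : N x = 0 -> x = 0.
Proof. by case: hN => h _ _; apply: h. Qed.

Lemma nrmZ (c : R) x : N (c *: x) = `|c| * N x.
Proof. by case: hN => _ h _; apply: h. Qed.

Lemma ler_nrmD x y : N (x + y) <= N x + N y.
Proof. by case: hN => _ _ h; apply: h. Qed.

Lemma nrm0 : N 0 = 0.
Proof. by rewrite -(scale0r (0 : V)) nrmZ normr0 mul0r. Qed.

Lemma nrmN x : N (- x) = N x.
Proof. by rewrite -scaleN1r nrmZ normrN normr1 mul1r. Qed.

Lemma nrm_ge0 x : 0 <= N x.
Proof. by have := ler_nrmD x (- x); rewrite subrr nrm0 nrmN; lra. Qed.

Lemma nrm_gt0 x : x != 0 -> 0 < N x.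
Proof.
move=> hx; rewrite lt_neqAle nrm_ge0 andbT eq_sym.
by apply: contra hx => /eqP /nrm_eq0 ->.
Qed.

Lemma nrmZ_ge0 (c : R) x : 0 <= c -> N (c *: x) = c * N x.
Proof. by move=> hc; rewrite nrmZ ger0_norm. Qed.

Lemma ler_nrmB x y : N x - N y <= N (x - y).
Proof. by have := ler_nrmD (x - y) y; rewrite subrK; lra. Qed.

Lemma nrm_convex (th : R) x y : 0 <= th <= 1 ->
  N ((1 - th) *: x + th *: y) <= (1 - th) * N x + th * N y.
Proof.
case/andP => h0 h1.
by apply: le_trans (ler_nrmD _ _) _; rewrite !nrmZ_ge0 // subr_ge0.
Qed.

Definition dquot (a w : V) (t : R) := (N (a + t *: w) - N a) / t.

Definition ddir (a w : V) := inf [set dquot a w t | t in [set t | 0 < t]].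

Lemma dquot_ge a w t : 0 < t -> - N w <= dquot a w t.
Proof.
move=> ht; rewrite /dquot ler_pdivlMr //.
by have := ler_nrmB a (- (t *: w)); rewrite opprK nrmN nrmZ_ge0 ?(ltW ht); lra.
Qed.

Lemma dquot_le a w t : 0 < t -> dquot a w t <= N w.
Proof.
move=> ht; rewrite /dquot ler_pdivrMr //.
by have := ler_nrmD a (t *: w); rewrite nrmZ_ge0 ?(ltW ht); lra.
Qed.

(* Convexity of [N] along the segment from [a] to [a + t w]. *)
Lemma dquot_mono a w s t : 0 < s -> s <= t -> dquot a w s <= dquot a w t.
Proof.
move=> hs hst; have ht : 0 < t by apply: lt_le_trans hst.
have th01 : 0 <= s / t <= 1.
  by rewrite divr_ge0 ?(ltW hs) ?(ltW ht) //= ler_pdivrMr // mul1r.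
have := nrm_convex a (a + t *: w) th01.
have -> : (1 - s / t) *: a + s / t *: (a + t *: w) = a + s *: w.
  by apply: row2P; rewrite !mxE; field; rewrite gt_eqF.
move=> h; rewrite /dquot ler_pdivrMr // mulrAC ler_pdivlMr //.
rewrite (_ : (N (a + t *: w) - N a) * s =
  t * ((1 - s / t) * N a + s / t * N (a + t *: w) - N a)); last first.
  by field; rewrite gt_eqF.
by rewrite mulrC ler_pM2l //; lra.
Qed.

Lemma ddir_has_inf a w : has_inf [set dquot a w t | t in [set t | 0 < t]].
Proof.
split; first by exists (dquot a w 1); exists 1 => //=; apply: ltr01.
by exists (- N w) => _ [t ht <-]; apply: dquot_ge.
Qed.

Lemma ddir_le_dquot a w t : 0 < t -> ddir a w <= dquot a w t.
Proof. by move=> ht; apply: (ge_inf (ddir_has_inf a w).2); exists t. Qed.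

Lemma ddir_ge a w d : (forall t, 0 < t -> d <= dquot a w t) -> d <= ddir a w.
Proof.
move=> h; apply: lb_le_inf; first by exists (dquot a w 1); exists 1 => //=; apply: ltr01.
by move=> _ [t ht <-]; apply: h.
Qed.

Lemma ddir_adherent a w e : 0 < e -> exists2 t, 0 < t &
  forall s, 0 < s -> s <= t -> dquot a w s < ddir a w + e.
Proof.
move=> he; have [_ [t ht <-] hq] := inf_adherent he (ddir_has_inf a w).
by exists t => // s hs hst; apply: le_lt_trans hq; apply: dquot_mono.
Qed.

Lemma ddir_ge_nrmN a w : - N w <= ddir a w.
Proof. by apply: ddir_ge => t; apply: dquot_ge. Qed.

Lemma ddir_le_nrm a w : ddir a w <= N w.
Proof. exact: le_trans (ddir_le_dquot a w ltr01) (dquot_le a w ltr01). Qed.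

Lemma ddir_rescale a b w v (m k : R) : 0 < m -> 0 < k ->
  (forall t, 0 < t -> dquot a w t = m * dquot b v (k * t)) ->
  ddir a w = m * ddir b v.
Proof.
move=> hm hk h; apply/eqP; rewrite eq_le; apply/andP; split.
  rewrite -ler_pdivrMl //; apply: ddir_ge => t ht.
  have htk : 0 < t / k by rewrite divr_gt0.
  rewrite ler_pdivrMl //; apply: le_trans (ddir_le_dquot _ _ htk) _.
  by rewrite h // [k * _]mulrC divfK ?gt_eqF.
apply: ddir_ge => t ht; rewrite h // ler_pM2l //.
by apply: ddir_le_dquot; rewrite mulr_gt0.
Qed.

Lemma ddir_const a w d : (forall t, 0 < t -> dquot a w t = d) -> ddir a w = d.
Proof.
move=> h; apply/eqP; rewrite eq_le; apply/andP; split.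
  by rewrite -(h 1 ltr01); apply: ddir_le_dquot.
by apply: ddir_ge => t ht; rewrite h.
Qed.

Lemma ddirNl a w : ddir (- a) w = ddir a (- w).
Proof.
rewrite -[ddir a _]mul1r; apply: (ddir_rescale ltr01 ltr01) => t _.
by rewrite !mul1r /dquot nrmN -nrmN opprD scalerN opprK.
Qed.

Lemma ddirZl a w (c : R) : 0 < c -> ddir (c *: a) w = ddir a w.
Proof.
move=> hc; have hc' : 0 < c^-1 by rewrite invr_gt0.
rewrite -[ddir a _]mul1r; apply: (ddir_rescale ltr01 hc') => t ht; rewrite /dquot.
have -> : c *: a + t *: w = c *: (a + (c^-1 * t) *: w).
  by rewrite scalerDr scalerA mulrA mulfV ?gt_eqF // mul1r.
by rewrite !nrmZ_ge0 ?(ltW hc) // mul1r; field; rewrite !gt_eqF.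
Qed.

Lemma ddirZr a w (c : R) : 0 <= c -> ddir a (c *: w) = c * ddir a w.
Proof.
rewrite le_eqVlt => /orP[/eqP<-|hc].
  rewrite mul0r scale0r; apply: ddir_const => t _.
  by rewrite /dquot scaler0 addr0 subrr mul0r.
apply: (ddir_rescale hc hc) => t ht.
by rewrite /dquot scalerA [t * c]mulrC; field; rewrite !gt_eqF.
Qed.

Lemma ddir_self a : ddir a a = N a.
Proof.
apply: ddir_const => t ht.
rewrite /dquot -{1}(scale1r a) -scalerDl nrmZ_ge0; first by field; rewrite gt_eqF.
by rewrite addr_ge0 ?ler01 ?(ltW ht).
Qed.

Lemma ddir_selfN a : ddir a (- a) = - N a.
Proof.
apply/eqP; rewrite eq_le; apply/andP; split; last by rewrite -nrmN ddir_ge_nrmN.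
apply: le_trans (ddir_le_dquot _ _ ltr01) _.
by rewrite /dquot scale1r subrr nrm0 sub0r divr1.
Qed.

Lemma ddir_subadd a x y : ddir a (x + y) <= ddir a x + ddir a y.
Proof.
apply/ler_addgt0Pr => e he; have he2 : 0 < e / 2 by rewrite divr_gt0.
have [tx htx hx] := ddir_adherent a x he2.
have [ty hty hy] := ddir_adherent a y he2.
pose t := Num.min tx ty.
have ht : 0 < t by rewrite lt_min htx hty.
have qx : dquot a x t < ddir a x + e / 2 by apply: hx; rewrite // ge_min lexx.
have qy : dquot a y t < ddir a y + e / 2 by apply: hy; rewrite // ge_min lexx orbT.
have mid : dquot a (x + y) (t / 2) <= dquot a x t + dquot a y t.
  rewrite /dquot; set u := a + t *: x; set v := a + t *: y.
  have -> : a + (t / 2) *: (x + y) = 2^-1 *: u + 2^-1 *: v.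
    by apply: row2P; rewrite !mxE; field.
  rewrite -mulrDl (_ : forall z, z / (t / 2) = (2 * z) / t); last first.
    by move=> z; field; rewrite gt_eqF.
  rewrite ler_pM2r ?invr_gt0 //.
  by have := ler_nrmD (2^-1 *: u) (2^-1 *: v); rewrite !nrmZ_ge0 ?invr_ge0 ?ler0n //; lra.
have := ddir_le_dquot a (x + y) (_ : 0 < t / 2); rewrite divr_gt0 // => /(_ isT).
by lra.
Qed.

Lemma ddir_along a (g : R) : ddir a (g *: a) = g * N a.
Proof.
have [hg|hg] := leP 0 g; first by rewrite ddirZr // ddir_self.
by rewrite -scaleNN ddirZr ?oppr_ge0 ?(ltW hg) // ddir_selfN mulrNN.
Qed.

Lemma ddir_lin a c (g d : R) : 0 <= d ->
  ddir a (g *: a + d *: c) = g * N a + d * ddir a c.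
Proof.
move=> hd; rewrite -ddirZr //; apply/eqP; rewrite eq_le; apply/andP; split.
  by rewrite -ddir_along; apply: ddir_subadd.
have := ddir_subadd a (g *: a + d *: c) ((- g) *: a).
by rewrite ddir_along addrAC -scalerDl subrr scale0r add0r mulNr; lra.
Qed.

(* Convexity of [N] along the ray from [a] through [a + s w]. *)
Lemma dquot_shift a w s t : 0 < s -> 0 < t -> dquot a w s <= dquot (a + s *: w) w t.
Proof.
move=> hs ht; have hst : 0 < s + t by rewrite addr_gt0.
have th01 : 0 <= s / (s + t) <= 1.
  by rewrite divr_ge0 ?(ltW hs) ?(ltW hst) //= ler_pdivrMr // mul1r lerDl ltW.
have := nrm_convex a (a + (s + t) *: w) th01.
have -> : (1 - s / (s + t)) *: a + s / (s + t) *: (a + (s + t) *: w) = a + s *: w.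
  by apply: row2P; rewrite !mxE; field; rewrite gt_eqF.
rewrite /dquot -addrA -scalerDl.
set A := N a; set B := N (a + s *: w); set C := N (a + (s + t) *: w) => h.
have h2 : (s + t) * B <= t * A + s * C.
  rewrite (_ : t * A + s * C = (s + t) * ((1 - s / (s + t)) * A + s / (s + t) * C)).
    by rewrite ler_pM2l.
  by field; rewrite gt_eqF.
by rewrite ler_pdivrMr // mulrAC ler_pdivlMr //; nra.
Qed.

Lemma ddir_shift a w (al be : R) : 0 <= al -> 0 < be ->
  ddir a w <= ddir (al *: a + be *: w) w.
Proof.
rewrite le_eqVlt => /orP[/eqP<- hbe|hal hbe].
  by rewrite scale0r add0r ddirZl // ddir_self ddir_le_nrm.
have -> : al *: a + be *: w = al *: (a + (be / al) *: w).
  by rewrite scalerDr scalerA mulrCA mulfV ?gt_eqF // mulr1.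
rewrite ddirZl //; have hs : 0 < be / al by rewrite divr_gt0.
apply: ddir_ge => t ht; apply: le_trans (ddir_le_dquot a w hs) _.
exact: dquot_shift.
Qed.

Lemma ddir_adherent_seq (s : seq V) w e : 0 < e ->
  exists2 t, 0 < t & forall b, b \in s -> dquot b w t < ddir b w + e.
Proof.
move=> he; elim: s => [|b s [t2 ht2 h2]]; first by exists 1.
have [t1 ht1 h1] := ddir_adherent b w he.
have ht : 0 < Num.min t1 t2 by rewrite lt_min ht1 ht2.
exists (Num.min t1 t2) => // b'; rewrite inE => /orP[/eqP->|/h2].
  by apply: h1; rewrite // ge_min lexx.
by apply: le_lt_trans; apply: dquot_mono; rewrite // ge_min lexx orbT.
Qed.

Lemma FT_point0P (s : seq V) :
  FT_point N 0 s <-> forall w, 0 <= \sum_(b <- s) ddir b w.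
Proof.
split=> [ft w|h x].
  apply/ler_addgt0Pr => e he.
  pose e' := e / (size s).+1%:R.
  have he' : 0 < e' by rewrite divr_gt0 ?ltr0Sn.
  have [t ht ht'] := ddir_adherent_seq s w he'.
  have q0 : 0 <= \sum_(b <- s) dquot b w t.
    rewrite -big_distrl /= divr_ge0 ?(ltW ht) // sumrB subr_ge0.
    have E0 : \sum_(b <- s) N (0 - b) = \sum_(b <- s) N b.
      by apply: eq_bigr => b _; rewrite sub0r nrmN.
    have Et : \sum_(b <- s) N (- (t *: w) - b) = \sum_(b <- s) N (b + t *: w).
      by apply: eq_bigr => b _; rewrite -nrmN opprB opprK.
    by have := ft (- (t *: w)); rewrite E0 Et.
  have q1 : \sum_(b <- s) dquot b w t <= \sum_(b <- s) ddir b w + e' *+ size s.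
    rewrite -iter_addr_0 -(count_predT s) -big_const_seq -big_split /=.
    by rewrite !big_seq; apply: ler_sum => b /ht' /ltW.
  have q2 : e' *+ size s <= e.
    by rewrite -mulr_natr /e' mulrAC ler_pdivrMr ?ltr0Sn // ler_pM2l // ler_nat.
  by apply: le_trans q0 _; apply: le_trans q1 _; rewrite lerD2l.
have E b : ddir b (- x) <= N (x - b) - N (0 - b).
  apply: le_trans (ddir_le_dquot _ _ ltr01) _.
  by rewrite /dquot scale1r divr1 sub0r nrmN -nrmN opprB.
by rewrite -subr_ge0 -sumrB; apply: le_trans (h (- x)) _; apply: ler_sum.
Qed.

Lemma FT_point_perm (x0 : V) s1 s2 : perm_eq s1 s2 ->
  FT_point N x0 s1 -> FT_point N x0 s2.
Proof. by move=> hp ft x; rewrite -!(perm_big _ hp). Qed.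

(* Moving from [0] towards [b3] shortens [0 b3] without lengthening [0 b1 + 0 b2]. *)
Lemma not_FT_point_in_cone b1 b2 b3 : in_cone b1 b2 b3 -> b3 != 0 ->
  ~ FT_point N 0 [:: b1; b2; b3].
Proof.
move=> [al [be [hal hbe eb3]]] n3 ft.
pose s := (1 + al + be)^-1.
have hs : 0 < s by rewrite invr_gt0; lra.
have hsal : s * al <= 1 by rewrite /s mulrC ler_pdivrMr; lra.
have hsbe : s * be <= 1 by rewrite /s mulrC ler_pdivrMr; lra.
have hs1 : s <= 1 by rewrite /s -div1r ler_pdivrMr; lra.
have := ft (s *: b3); rewrite !big_cons !big_nil !sub0r !nrmN !addr0.
have -> : s *: b3 - b1 = (- (1 - s * al)) *: b1 + (s * be) *: b2.
  by rewrite eb3; apply: row2P; rewrite !mxE; ring.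
have -> : s *: b3 - b2 = (s * al) *: b1 + (- (1 - s * be)) *: b2.
  by rewrite eb3; apply: row2P; rewrite !mxE; ring.
have -> : s *: b3 - b3 = (- (1 - s)) *: b3 by rewrite scaleNr scalerBl scale1r opprB.
have N12 (k l : R) : N (k *: b1 + l *: b2) <= `|k| * N b1 + `|l| * N b2.
  by apply: le_trans (ler_nrmD _ _) _; rewrite !nrmZ.
have := N12 (- (1 - s * al)) (s * be); have := N12 (s * al) (- (1 - s * be)).
rewrite nrmZ !normrN !ger0_norm ?subr_ge0 ?mulr_ge0 ?(ltW hs) //.
have := nrm_gt0 n3; have := nrm_ge0 b1; have := nrm_ge0 b2; nra.
Qed.

Lemma FT_point_not_pointed a1 a2 a3 : a1 != 0 -> a2 != 0 -> a3 != 0 ->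
  FT_point N 0 [:: a1; a2; a3] -> ~ pointed 0 [:: a1; a2; a3].
Proof.
move=> n1 n2 n3 ft /pointed0P [c hpos].
have [p1 p2 p3] : [/\ 0 < dotp c a1, 0 < dotp c a2 & 0 < dotp c a3].
  by split; apply: hpos; rewrite !inE eqxx ?orbT.
have no_cone b1 b2 b3 : in_cone b1 b2 b3 -> b3 != 0 ->
    perm_eq [:: a1; a2; a3] [:: b1; b2; b3] -> False.
  by move=> hcone nb3 hp; apply: not_FT_point_in_cone hcone nb3 (FT_point_perm hp ft).
have [d3|d3] := eqVneq (det2 a1 a2) 0.
  apply: (no_cone a1 a3 a2 (in_cone_of_det2_eq0 a3 d3 n1 p1 p2) n2).
  by apply/permP => p /=; ring.
have [d1|d1] := eqVneq (det2 a2 a3) 0.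
  apply: (no_cone a2 a1 a3 (in_cone_of_det2_eq0 a1 d1 n2 p2 p3) n3).
  by apply/permP => p /=; ring.
have [d2|d2] := eqVneq (det2 a3 a1) 0.
  apply: (no_cone a3 a2 a1 (in_cone_of_det2_eq0 a2 d2 n3 p3 p1) n1).
  by apply/permP => p /=; ring.
case: (relation_or_in_cone d1 d2 d3) => [[l1 [l2 [l3 [hl1 hl2 hl3 G]]]]|hc|hc|hc].
- have := congr1 (dotp c) G; rewrite !dotpDr !dotpZr dotp0r => hG.
  have : 0 < l1 * dotp c a1 + l2 * dotp c a2 + l3 * dotp c a3.
    by rewrite !addr_gt0 ?mulr_gt0.
  by rewrite hG ltxx.
- by apply: (no_cone _ _ _ hc n1); apply/permP => p /=; ring.
- by apply: (no_cone _ _ _ hc n2); apply/permP => p /=; ring.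
exact: (no_cone _ _ _ hc n3).
Qed.

Definition ddir3 (b1 b2 b3 w : V) := ddir b1 w + ddir b2 w + ddir b3 w.

Lemma FT_point3P b1 b2 b3 :
  FT_point N 0 [:: b1; b2; b3] <-> forall w, 0 <= ddir3 b1 b2 b3 w.
Proof.
have E w : \sum_(b <- [:: b1; b2; b3]) ddir b w = ddir3 b1 b2 b3 w.
  by rewrite !big_cons big_nil addr0 addrA /ddir3.
by split=> [/FT_point0P h w|h]; [rewrite -E | apply/FT_point0P => w; rewrite E].
Qed.

Lemma ddir3_rot b1 b2 b3 w : ddir3 b1 b2 b3 w = ddir3 b2 b3 b1 w.
Proof. by rewrite /ddir3; ring. Qed.

Lemma ddir3_swap b1 b2 b3 w : ddir3 b1 b2 b3 w = ddir3 b2 b1 b3 w.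
Proof. by rewrite /ddir3; ring. Qed.

(* With [J b] the set of unit functionals [phi] with [phi b = N b], [ddir b] is
   the support function of [J b].  Hence [crit_lower b1 b2] says that some
   [phi1 + phi2] ([phi_i \in J b_i]) has dual norm at most 1, and
   [crit_upper b1 b2] that some has dual norm at least 1. *)
Definition crit_lower (b1 b2 : V) := forall w, - N w <= ddir b1 w + ddir b2 w.

Definition crit_upper (b1 b2 : V) :=
  exists2 x, x != 0 & N x <= ddir b1 x + ddir b2 x.

Definition crit_pair (b1 b2 : V) := crit_lower b1 b2 /\ crit_upper b1 b2.

Lemma crit_lowerC b1 b2 : crit_lower b1 b2 -> crit_lower b2 b1.
Proof. by move=> h w; rewrite addrC. Qed.

Lemma crit_upperC b1 b2 : crit_upper b1 b2 -> crit_upper b2 b1.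
Proof. by case=> x hx h; exists x; rewrite // addrC. Qed.

Lemma crit_pairC b1 b2 : crit_pair b1 b2 -> crit_pair b2 b1.
Proof. by case=> /crit_lowerC l /crit_upperC u. Qed.

Lemma critical_crit b1 b2 : critical N b1 0 b2 -> crit_pair b1 b2.
Proof.
case=> y [hy /FT_point3P ft]; split=> [w|].
  by have := ft w; have := ddir_le_nrm y w; rewrite /ddir3; lra.
exists (- y); first by rewrite oppr_eq0.
by have := ft (- y); rewrite /ddir3 ddir_selfN nrmN; lra.
Qed.

Lemma crit_lower_not_pos_colinear b1 b2 (c : R) : crit_lower b1 b2 -> b1 != 0 ->
  0 < c -> b2 != c *: b1.
Proof.
move=> h n1 hc; apply/eqP => eb2; have := h (- b1).
by rewrite eb2 ddirZl // ddir_selfN nrmN; have := nrm_gt0 n1; lra.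
Qed.

Lemma crit_lower_colinear b1 b2 : crit_lower b1 b2 -> b1 != 0 -> b2 != 0 ->
  det2 b1 b2 = 0 -> exists2 c, c < 0 & b2 = c *: b1.
Proof.
move=> h n1 n2 hd; have [c eb2] := det2_eq0_colinear hd n1; exists c => //.
rewrite ltNge le_eqVlt negb_or; apply/andP; split.
  by apply: contra n2 => /eqP c0; rewrite eb2 -c0 scale0r.
by apply/negP => hc; move/eqP: eb2; apply/negP/crit_lower_not_pos_colinear.
Qed.

Lemma ddir_lower_line a c (s t : R) : 0 <= ddir a c -> 0 <= ddir a (- c) ->
  t * N a <= ddir a (t *: a + s *: c).
Proof.
move=> p1 p2; have [hs|hs] := leP 0 s.
  by rewrite ddir_lin //; have := mulr_ge0 hs p1; lra.
have hs' : 0 <= - s by rewrite oppr_ge0 ltW.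
by rewrite -[s *: c]scaleNN ddir_lin //; have := mulr_ge0 hs' p2; lra.
Qed.

Lemma ddir_sym_sum a c (s t : R) : ddir a (s *: a + t *: c) + ddir a (- (s *: a + t *: c)) =
  `|t| * (ddir a c + ddir a (- c)).
Proof.
have [ht|ht] := leP 0 t.
  have -> : - (s *: a + t *: c) = (- s) *: a + t *: (- c).
    by rewrite opprD scaleNr scalerN.
  by rewrite !ddir_lin // ger0_norm //; ring.
have -> : s *: a + t *: c = s *: a + (- t) *: (- c) by rewrite scaleNN.
have -> : - (s *: a + (- t) *: (- c)) = (- s) *: a + (- t) *: c.
  by rewrite scaleNN opprD !scaleNr.
by rewrite !ddir_lin ?oppr_ge0 ?(ltW ht) // ltr0_norm //; ring.
Qed.

Lemma nrm_lower_line a c (s t : R) : 0 <= ddir a c -> 0 <= ddir a (- c) ->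
  `|t| * N a <= N (t *: a + s *: c).
Proof.
move=> p1 p2; have [ht|ht] := leP 0 t.
  by rewrite ger0_norm //; apply: le_trans (ddir_le_nrm a _); apply: ddir_lower_line.
rewrite ltr0_norm // -[N (_ + _)]nrmN opprD -!scaleNr.
by apply: le_trans (ddir_le_nrm a _); apply: ddir_lower_line.
Qed.

Lemma ddir3_ge0_colinear a1 a2 a3 w : a1 != 0 -> a2 != 0 -> a3 != 0 ->
  det2 a1 a2 = 0 -> crit_pair a1 a2 -> crit_pair a1 a3 -> crit_pair a2 a3 ->
  0 <= ddir3 a1 a2 a3 w.
Proof.
move=> n1 n2 n3 d12 [l12 [x x0 hx]] [l13 _] [l23 _].
have [c hc ea2] := crit_lower_colinear l12 n1 n2 d12.
have d13 : det2 a1 a3 != 0.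
  apply/eqP => d13; have [c' hc' ea3] := crit_lower_colinear l13 n1 n3 d13.
  have hcc : 0 < c' / c by rewrite ltr_ndivlMr // mul0r.
  move/eqP: (crit_lower_not_pos_colinear l23 n2 hcc); apply.
  by rewrite ea3 ea2 scalerA divfK ?ltr0_neq0.
have Da2 v : ddir a2 v = ddir a1 (- v).
  by rewrite ea2 -scaleNN ddirZl ?oppr_gt0 // ddirNl.
have P1 : 0 <= ddir a3 a1 by have := l23 a1; rewrite Da2 ddir_selfN; lra.
have P2 : 0 <= ddir a3 (- a1) by have := l13 (- a1); rewrite ddir_selfN nrmN; lra.
have Q3 : N a3 <= ddir a1 a3 + ddir a1 (- a3).
  move: x0 hx; have [s [t ->]] := det2_span x d13; rewrite Da2 ddir_sym_sum => x0 hx.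
  have := nrm_lower_line s t P1 P2; rewrite addrC => Nx.
  have [t0|t0] := eqVneq t 0.
    by move: x0 hx; rewrite t0 scale0r addr0 normr0 mul0r => /nrm_gt0; lra.
  by rewrite -(ler_pM2l (_ : 0 < `|t|)) ?normr_gt0 //; apply: le_trans hx.
have [s [t ->]] := det2_span w d13; rewrite /ddir3 Da2.
have := ddir_sym_sum a1 a3 s t; have := ddir_lower_line s t P1 P2; rewrite addrC.
have : - t * N a3 <= `|t| * N a3 by rewrite ler_wpM2r ?nrm_ge0 // -normrN ler_norm.
have : `|t| * N a3 <= `|t| * (ddir a1 a3 + ddir a1 (- a3)) by rewrite ler_wpM2l.
lra.
Qed.

Lemma ddir_transfer b1 b2 b3 x (s t mu la : R) :
  x = s *: b1 + t *: b2 -> 0 <= s -> - b3 = mu *: x + la *: b1 ->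
  0 < mu -> 0 <= la -> crit_lower b2 b3 -> N x <= ddir b1 x + ddir b2 x ->
  N b3 <= ddir b1 (- b3) + ddir b2 (- b3).
Proof.
move=> ex hs eb3 hmu hla l23 hx.
have D1 : ddir b1 (- b3) = la * N b1 + mu * ddir b1 x.
  by rewrite eb3 addrC ddir_lin // ltW.
have D2 : ddir b2 (- b3) = mu * ddir b2 x + la * ddir b2 b1.
  have -> : - b3 = (mu * t) *: b2 + (mu * s + la) *: b1.
    by rewrite eb3 ex; apply: row2P; rewrite !mxE; ring.
  by rewrite ex [s *: b1 + _]addrC !ddir_lin ?addr_ge0 ?mulr_ge0 ?(ltW hmu) //; ring.
have F : N b3 + la * ddir b3 b1 <= mu * N x.
  rewrite -nrmZ_ge0 ?(ltW hmu) // (_ : mu *: x = - (1 *: b3 + la *: b1)).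
    by rewrite nrmN; apply: le_trans _ (ddir_le_nrm b3 _); rewrite ddir_lin // mul1r.
  by rewrite scale1r opprD eb3 addrK.
have := ler_wpM2l (ltW hmu) hx.
have P : 0 <= la * (N b1 + ddir b2 b1 + ddir b3 b1).
  by rewrite mulr_ge0 //; have := l23 b1; lra.
rewrite D1 D2; lra.
Qed.

Lemma crit_upper_opp b1 b2 b3 (l1 l2 l3 s t : R) :
  0 < l1 -> 0 < l2 -> 0 < l3 -> l1 *: b1 + l2 *: b2 + l3 *: b3 = 0 ->
  crit_lower b1 b3 -> crit_lower b2 b3 -> 0 <= s -> 0 <= t ->
  s *: b1 + t *: b2 != 0 ->
  N (s *: b1 + t *: b2) <= ddir b1 (s *: b1 + t *: b2) + ddir b2 (s *: b1 + t *: b2) ->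
  N b3 <= ddir b1 (- b3) + ddir b2 (- b3).
Proof.
wlog hst : b1 b2 l1 l2 s t / s * l2 <= t * l1.
  move=> base hl1 hl2 hl3 G l13 l23 hs ht x0 hx.
  have [h|h] := leP (s * l2) (t * l1); first exact: (base b1 b2 l1 l2 s t).
  rewrite addrC; apply: (base b2 b1 l2 l1 t s) => //; rewrite ?(ltW h) ?[t *: b2 + _]addrC //.
    by rewrite [l2 *: b2 + _]addrC.
  by rewrite [ddir b2 _ + _]addrC.
move=> hl1 hl2 hl3 G l13 l23 hs ht x0 hx.
have htp : 0 < t.
  rewrite lt_neqAle ht andbT eq_sym; apply: contra x0 => /eqP t0.
  have s0 : s = 0 by move: hst; rewrite t0 mul0r; nra.
  by rewrite s0 t0 !scale0r addr0.
have eb3 := relation3_solve G (lt0r_neq0 hl3).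
apply: (@ddir_transfer _ _ _ _ s t (l2 / (l3 * t)) ((l1 * t - l2 * s) / (l3 * t))) => //.
- by rewrite eb3; apply: row2P; rewrite !mxE; field; rewrite !gt_eqF.
- by rewrite divr_gt0 ?mulr_gt0.
by rewrite divr_ge0 ?mulr_ge0 ?subr_ge0 ?(ltW hl3) ?(ltW htp) //; lra.
Qed.

Lemma ddir_neg_cone u v (p q : R) : p < 0 -> q < 0 ->
  ddir u (p *: u + q *: v) <= ddir v (- (p *: u + q *: v)).
Proof.
move=> hp hq; rewrite -ddirNl.
have -> : - v = (p / q) *: u + (- 1 / q) *: (p *: u + q *: v).
  by apply: row2P; rewrite !mxE; field; rewrite ltr0_neq0.
apply: ddir_shift; first by rewrite mulr_le0 ?invr_le0 ?ltW.
by rewrite mulN1r oppr_gt0 invr_lt0.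
Qed.

Lemma crit_upper_mixed b1 b2 (s t : R) : b2 != 0 -> 0 <= s -> t < 0 ->
  N (s *: b1 + t *: b2) <= ddir b1 (s *: b1 + t *: b2) + ddir b2 (s *: b1 + t *: b2) ->
  N b1 <= ddir b1 b1 + ddir b2 b1.
Proof.
move=> n2 hs ht hx; rewrite ddir_self lerDl.
move: hx; rewrite [in ddir b2 _]addrC (ddir_lin b2) // => hx.
have tN : t * N b2 < 0 by have := nrm_gt0 n2; nra.
rewrite leNgt; apply/negP => hD; have := mulr_ge0_le0 hs (ltW hD).
by have := ddir_le_nrm b1 (s *: b1 + t *: b2); lra.
Qed.

Lemma crit_upper_in_cone b1 b2 : det2 b1 b2 != 0 -> b1 != 0 -> b2 != 0 ->
  crit_upper b1 b2 -> exists s t : R, [/\ 0 <= s, 0 <= t, s *: b1 + t *: b2 != 0 &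
    N (s *: b1 + t *: b2) <= ddir b1 (s *: b1 + t *: b2) + ddir b2 (s *: b1 + t *: b2)].
Proof.
move=> hd n1 n2 [x x0 hx]; have [s [t ex]] := det2_span x hd; rewrite {}ex in x0 hx.
have [hs|hs] := leP 0 s; have [ht|ht] := leP 0 t.
- by exists s, t.
- exists 1, 0; rewrite scale1r scale0r addr0; split => //.
  exact: crit_upper_mixed n2 hs ht hx.
- exists 0, 1; rewrite scale1r scale0r add0r [ddir b1 _ + _]addrC; split => //.
  by apply: (crit_upper_mixed n1 ht hs); rewrite addrC [ddir b2 _ + _]addrC.
exists (- s), (- t); rewrite !scaleNr -opprD oppr_eq0 nrmN !oppr_ge0 (ltW hs) (ltW ht).
split => //; have := ddir_neg_cone b1 b2 hs ht.
by have := ddir_neg_cone b2 b1 ht hs; rewrite addrC; lra.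
Qed.

Lemma ddir_halfplane_lin a c u v (g d g' d' al be : R) : 0 <= d -> 0 <= d' ->
  0 <= al -> 0 <= be -> u = g *: a + d *: c -> v = g' *: a + d' *: c ->
  ddir a (al *: u + be *: v) = al * ddir a u + be * ddir a v.
Proof.
move=> hd hd' hal hbe -> ->.
have -> : al *: (g *: a + d *: c) + be *: (g' *: a + d' *: c) =
    (al * g + be * g') *: a + (al * d + be * d') *: c.
  by apply: row2P; rewrite !mxE; ring.
by rewrite !ddir_lin ?addr_ge0 ?mulr_ge0 //; ring.
Qed.

(* On the cone spanned by [b1] and [- b3], each [ddir b_i] is linear: write
   both generators in a half-plane bounded by the line through [b_i]. *)
Lemma ddir3_cone_lin b1 b2 b3 (l1 l2 l3 al be : R) :
  0 < l1 -> 0 < l2 -> 0 < l3 -> l1 *: b1 + l2 *: b2 + l3 *: b3 = 0 ->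
  0 <= al -> 0 <= be ->
  ddir3 b1 b2 b3 (al *: b1 + be *: (- b3)) =
  al * ddir3 b1 b2 b3 b1 + be * ddir3 b1 b2 b3 (- b3).
Proof.
move=> hl1 hl2 hl3 G hal hbe; have e3 := relation3_solve G (lt0r_neq0 hl3).
have E1 : ddir b1 (al *: b1 + be *: (- b3)) = al * ddir b1 b1 + be * ddir b1 (- b3).
  apply: (ddir_halfplane_lin (c := b2) (g := 1) (d := 0) (g' := l1 / l3) (d' := l2 / l3)).
  - by [].
  - by rewrite divr_ge0 ?ltW.
  - by [].
  - by [].
  - by rewrite scale1r scale0r addr0.
  by rewrite e3 opprD -!scaleNr !opprK.
have E2 : ddir b2 (al *: b1 + be *: (- b3)) = al * ddir b2 b1 + be * ddir b2 (- b3).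
  apply: (ddir_halfplane_lin (c := - b3) (g := - (l2 / l1)) (d := l3 / l1) (g' := 0) (d' := 1)).
  - by rewrite divr_ge0 ?ltW.
  - by [].
  - by [].
  - by [].
  - by rewrite e3; apply: row2P; rewrite !mxE; field; rewrite !gt_eqF.
  by rewrite scale0r scale1r add0r.
have E3 : ddir b3 (al *: b1 + be *: (- b3)) = al * ddir b3 b1 + be * ddir b3 (- b3).
  apply: (ddir_halfplane_lin (c := - b2) (g := - (l3 / l1)) (d := l2 / l1) (g' := -1) (d' := 0)).
  - by rewrite divr_ge0 ?ltW.
  - by [].
  - by [].
  - by [].
  - by rewrite e3; apply: row2P; rewrite !mxE; field; rewrite !gt_eqF.
  by rewrite scale0r addr0 scaleN1r.
by rewrite /ddir3 E1 E2 E3; ring.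
Qed.

Lemma ddir3_ge0_in_cone b1 b2 b3 (l1 l2 l3 : R) w :
  0 < l1 -> 0 < l2 -> 0 < l3 -> l1 *: b1 + l2 *: b2 + l3 *: b3 = 0 ->
  0 <= ddir3 b1 b2 b3 b1 -> 0 <= ddir3 b1 b2 b3 (- b3) -> in_cone b1 (- b3) w ->
  0 <= ddir3 b1 b2 b3 w.
Proof.
move=> hl1 hl2 hl3 G S M [al [be [hal hbe ->]]].
by rewrite (ddir3_cone_lin hl1 hl2 hl3 G hal hbe) addr_ge0 ?mulr_ge0.
Qed.

Lemma ddir3_self_ge0 b1 b2 b3 : crit_lower b2 b3 -> 0 <= ddir3 b1 b2 b3 b1.
Proof. by move=> h; have := h b1; rewrite /ddir3 ddir_self; lra. Qed.

Lemma ddir3_opp_ge0 b1 b2 b3 (l1 l2 l3 : R) :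
  0 < l1 -> 0 < l2 -> 0 < l3 -> l1 *: b1 + l2 *: b2 + l3 *: b3 = 0 ->
  det2 b1 b2 != 0 -> b1 != 0 -> b2 != 0 ->
  crit_lower b1 b3 -> crit_lower b2 b3 -> crit_upper b1 b2 ->
  0 <= ddir3 b1 b2 b3 (- b3).
Proof.
move=> hl1 hl2 hl3 G hd n1 n2 l13 l23 u12.
have [s [t [hs ht x0 hx]]] := crit_upper_in_cone hd n1 n2 u12.
have := crit_upper_opp hl1 hl2 hl3 G l13 l23 hs ht x0 hx.
by rewrite /ddir3 ddir_selfN; lra.
Qed.

Lemma ddir3_ge0_relation a1 a2 a3 (l1 l2 l3 : R) w :
  0 < l1 -> 0 < l2 -> 0 < l3 -> l1 *: a1 + l2 *: a2 + l3 *: a3 = 0 ->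
  det2 a1 a2 != 0 -> det2 a2 a3 != 0 -> det2 a3 a1 != 0 ->
  a1 != 0 -> a2 != 0 -> a3 != 0 ->
  crit_pair a1 a2 -> crit_pair a1 a3 -> crit_pair a2 a3 ->
  0 <= ddir3 a1 a2 a3 w.
Proof.
move=> hl1 hl2 hl3 G d12 d23 d31 n1 n2 n3 [l12 u12] [l13 u13] [l23 u23].
have G213 : l2 *: a2 + l1 *: a1 + l3 *: a3 = 0 by rewrite [l2 *: a2 + _]addrC.
have G132 : l1 *: a1 + l3 *: a3 + l2 *: a2 = 0 by rewrite addrAC.
have G231 : l2 *: a2 + l3 *: a3 + l1 *: a1 = 0 by rewrite addrC addrA.
have G312 : l3 *: a3 + l1 *: a1 + l2 *: a2 = 0 by rewrite addrC addrA.
have G321 : l3 *: a3 + l2 *: a2 + l1 *: a1 = 0 by rewrite [l3 *: a3 + _]addrC.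
have S1 : 0 <= ddir3 a1 a2 a3 a1 := ddir3_self_ge0 a1 l23.
have S2 : 0 <= ddir3 a1 a2 a3 a2 by rewrite ddir3_swap; apply: ddir3_self_ge0.
have S3 : 0 <= ddir3 a1 a2 a3 a3.
  by rewrite ddir3_rot ddir3_rot; apply: ddir3_self_ge0.
have M3 : 0 <= ddir3 a1 a2 a3 (- a3) := ddir3_opp_ge0 hl1 hl2 hl3 G d12 n1 n2 l13 l23 u12.
have M1 : 0 <= ddir3 a1 a2 a3 (- a1).
  rewrite ddir3_rot; apply: (ddir3_opp_ge0 hl2 hl3 hl1 G231 d23 n2 n3) => //;
  exact: crit_lowerC.
have M2 : 0 <= ddir3 a1 a2 a3 (- a2).
  rewrite ddir3_rot ddir3_rot; apply: (ddir3_opp_ge0 hl3 hl1 hl2 G312 d31 n3 n1) => //.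
    exact: crit_lowerC.
  exact: crit_upperC.
case: (cone6_cover w hl1 hl2 hl3 G d12) => [[]|[]|[]] hw.
- exact: ddir3_ge0_in_cone hl1 hl2 hl3 G S1 M3 hw.
- rewrite ddir3_swap; apply: (ddir3_ge0_in_cone hl2 hl1 hl3 G213 _ _ hw);
  by rewrite -ddir3_swap.
- rewrite ddir3_rot ddir3_rot ddir3_swap.
  apply: (ddir3_ge0_in_cone hl1 hl3 hl2 G132 _ _ hw);
  by rewrite -ddir3_swap -ddir3_rot -ddir3_rot.
- rewrite ddir3_rot ddir3_rot; apply: (ddir3_ge0_in_cone hl3 hl1 hl2 G312 _ _ hw);
  by rewrite -ddir3_rot -ddir3_rot.
- rewrite ddir3_rot; apply: (ddir3_ge0_in_cone hl2 hl3 hl1 G231 _ _ hw);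
  by rewrite -ddir3_rot.
rewrite ddir3_rot ddir3_swap; apply: (ddir3_ge0_in_cone hl3 hl2 hl1 G321 _ _ hw);
by rewrite -ddir3_swap -ddir3_rot.
Qed.

Lemma crit_not_pointed_FT_point a1 a2 a3 : a1 != 0 -> a2 != 0 -> a3 != 0 ->
  ~ pointed 0 [:: a1; a2; a3] ->
  crit_pair a1 a2 -> crit_pair a1 a3 -> crit_pair a2 a3 ->
  FT_point N 0 [:: a1; a2; a3].
Proof.
move=> n1 n2 n3 np c12 c13 c23; apply/FT_point3P => w.
have [d12|d12] := eqVneq (det2 a1 a2) 0.
  exact: ddir3_ge0_colinear n1 n2 n3 d12 c12 c13 c23.
have [d13|d13] := eqVneq (det2 a1 a3) 0.
  rewrite ddir3_rot ddir3_rot ddir3_swap.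
  exact: ddir3_ge0_colinear n1 n3 n2 d13 c13 c12 (crit_pairC c23).
have [d23|d23] := eqVneq (det2 a2 a3) 0.
  rewrite ddir3_rot.
  exact: ddir3_ge0_colinear n2 n3 n1 d23 c23 (crit_pairC c12) (crit_pairC c13).
have d31 : det2 a3 a1 != 0 by rewrite det2C oppr_eq0.
have [l1 [l2 [l3 [hl1 hl2 hl3 G]]]] := not_pointed_relation n1 n2 n3 d23 d31 d12 np.
exact: ddir3_ge0_relation hl1 hl2 hl3 G d12 d23 d31 n1 n2 n3 c12 c13 c23.
Qed.

End MinkowskiPlane.

Theorem theorem5p5 (R : realType) (N : 'rV[R]_2 -> R) (hN : is_norm N)
    (a1 a2 a3 : 'rV[R]_2) (h1 : a1 != 0) (h2 : a2 != 0) (h3 : a3 != 0) :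
  floating_FT_config N 0 [:: a1; a2; a3] <->
  (~ pointed 0 [:: a1; a2; a3] /\
   forall i j : 'I_3, i != j ->
     critical N (nth 0 [:: a1; a2; a3] i) 0 (nth 0 [:: a1; a2; a3] j)).
Proof.
split=> [[_ ft]|[np hcrit]].
  split; first exact (FT_point_not_pointed hN h1 h2 h3 ft).
  have crit b1 b2 b3 : b3 != 0 -> perm_eq [:: a1; a2; a3] [:: b1; b2; b3] ->
      critical N b1 0 b2.
    by move=> nb3 hp; exists b3; split=> //; apply: FT_point_perm hp ft.
  move=> [[|[|[|//]]] hi] [[|[|[|//]]] hj] //= _;
    [ apply: (crit _ _ a3) | apply: (crit _ _ a2) | apply: (crit _ _ a3)
    | apply: (crit _ _ a1) | apply: (crit _ _ a2) | apply: (crit _ _ a1) ] => //;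
    by apply/permP => p /=; ring.
have c12 := critical_crit hN (hcrit 0 1 erefl).
have c13 := critical_crit hN (hcrit 0 2 erefl).
have c23 := critical_crit hN (hcrit 1 2 erefl).
split; first by move=> y; rewrite !inE => /or3P[] /eqP ->.
exact (crit_not_pointed_FT_point hN h1 h2 h3 np c12 c13 c23).
Qed.
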